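(* Let $\mathcal C=\{c_1,\ldots,c_m\}$ and $n\ge 1$. Suppose the manipulator has no information, i.e. the information set is $E=\mathcal F_n$, the set of all $n$-profiles of linear orders on $\mathcal C$. Then the Borda rule (with ties broken in the order $c_1\succ c_2\succ\cdots\succ c_m$) is immune to dominating manipulation: for every linear order $V_M$ on $\mathcal C$, no linear order $U$ on $\mathcal C$ dominates $V_M$.
   Context: Borda: each vote gives $m-i$ points to the alternative in its $i$-th position; the alternative with the highest total score wins, ties broken in favor of the alternative with the smallest index. There are $n$ non-manipulators and one manipulator with true preferences $V_M$ (a linear order). Given an information set $E$ (a set of $n$-profiles of the non-manipulators), a vote $U$ dominates a vote $V$ if for every $P\in E$, $r(P\cup\{U\})$ is ranked weakly above $r(P\cup\{V\})$ in $V_M$, and for some $P'\in E$, $r(P'\cup\{U\})$ is ranked strictly above $r(P'\cup\{V\})$ in $V_M$. Immunity means that for every $V_M$ no vote dominates $V_M$. *)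

From mathcomp Require Import all_boot all_order all_fingroup.
Set Implicit Arguments. Unset Strict Implicit. Unset Printing Implicit Defensive.

(* Candidates c_1..c_k are represented by 'I_k (c_{i+1} = i); we use k = m.+1
   candidates so that a winner always exists.  A linear order (vote) on the
   candidates is a permutation V : {perm 'I_k}, where V i is the candidate in
   position i (0-based; position 0 = top). *)

Definition vote k := {perm 'I_k}.

Definition pos k (V : vote k) (c : 'I_k) : nat := (V^-1)%g c.

(* Borda: position i (1-based) gets k - i points, i.e. 0-based p gets k-1-p *)
Definition borda_pts k (V : vote k) (c : 'I_k) : nat := k.-1 - pos V c.

Definition score k (P : seq (vote k)) (c : 'I_k) : nat :=
  \sum_(V <- P) borda_pts V c.

Definition borda_winner m (P : seq (vote m.+1)) : 'I_m.+1 :=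
  odflt ord0 [pick c : 'I_m.+1 | [forall d : 'I_m.+1,
      (score P d <= score P c) && ((score P d == score P c) ==> (c <= d))]].
(* the predicate has exactly one solution (the lowest-index maximiser), so the
   default ord0 is never used *)

Definition weakly_above k (V : vote k) (a b : 'I_k) : Prop := pos V a <= pos V b.
Definition strictly_above k (V : vote k) (a b : 'I_k) : Prop := pos V a < pos V b.

(* n-profiles of non-manipulators *)
Definition nprofile n k := {ffun 'I_n -> vote k}.
Definition prof_seq n k (P : nprofile n k) : seq (vote k) := [seq P i | i <- enum 'I_n].

Definition outcome n m (P : nprofile n m.+1) (U : vote m.+1) : 'I_m.+1 :=
  borda_winner (rcons (prof_seq P) U).

Definition dominates n m (E : nprofile n m.+1 -> Prop) (VM U V : vote m.+1) : Prop :=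
  (forall P, E P -> weakly_above VM (outcome P U) (outcome P V)) /\
  (exists P, E P /\ strictly_above VM (outcome P U) (outcome P V)).

From mathcomp Require Import all_boot all_order all_fingroup.
From mathcomp Require Import zify.
Set Implicit Arguments. Unset Strict Implicit. Unset Printing Implicit Defensive.

(* Let [i] be the first position where [U] and [VM] differ, [a := VM i] and
   [d := U i], so [VM] ranks [d] strictly below [a]; it suffices to find one
   profile where the sincere ballot elects a candidate [VM] prefers to the one
   [U] elects.  Pairs of mutually reversed votes shift all scores equally, so
   only one (n odd) or two (n even) votes matter, and the winner minimises the
   sum of positions.  For n even, votes [a; d; ...] and [d; a; ...] make [a] win
   sincerely and [d] win under [U].  For n odd, the vote [d; a; ...] makes [d]
   win under [U]; the sincere ballot then elects something [VM] prefers to [d]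
   unless [d] wins by tie-breaking, and those very ties make [a; d; ...] elect
   [a] sincerely and [d] under [U]. *)

Section Votes.
Variable k : nat.
Implicit Types (V W : vote k) (s : seq (vote k)) (c x y : 'I_k).

Lemma pos_inj V : injective (pos V).
Proof. by move=> c1 c2 /val_inj /perm_inj. Qed.

Lemma pos_lt V c : pos V c < k.
Proof. exact: ltn_ord. Qed.

Lemma pos_neq V x y : x != y -> pos V x <> pos V y.
Proof. by move=> /eqP ne_xy /pos_inj. Qed.

Lemma pos_swap V x y c : pos (V * tperm x y)%g c = pos V (tperm x y c).
Proof. by rewrite /pos invgM tpermV permM. Qed.

Definition rev_vote V : vote k := ((V^-1 * perm (@rev_ord_inj k))^-1)%g.

Lemma pos_rev_vote V c : pos (rev_vote V) c = k.-1 - pos V c.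
Proof. rewrite /pos invgK permM permE /=; lia. Qed.

Lemma exists_vote_top2 R x y : x != y ->
  exists W, [/\ pos W x = 0, pos W y = 1 &
    forall c, c != x -> c != y -> 1 < pos R c -> pos W c = pos R c].
Proof.
move=> ne_xy; have k_gt1 : 1 < k.
  apply: contraNT ne_xy; rewrite -leqNgt => k_le1.
  by apply/eqP/ord_inj; move: (ltn_ord x) (ltn_ord y); lia.
pose z0 := R (Ordinal (ltnW k_gt1)); pose W1 := (R * tperm x z0)%g.
pose z1 := W1 (Ordinal k_gt1); pose W := (W1 * tperm y z1)%g.
have W1_x : pos W1 x = 0 by rewrite pos_swap tpermL /pos permK.
have W1_z1 : pos W1 z1 = 1 by rewrite /pos permK.
have ne_xz1 : x != z1 by apply/eqP => eq_xz1; move: W1_z1; rewrite -eq_xz1 W1_x.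
exists W; split.
- by rewrite pos_swap tpermD // eq_sym.
- by rewrite pos_swap tpermL.
move=> c ne_cx ne_cy R_c.
have ne_cz0 : c != z0 by apply: contraTneq R_c => ->; rewrite /pos permK.
have W1_c : pos W1 c = pos R c by rewrite pos_swap tpermD // eq_sym.
have ne_cz1 : c != z1 by apply: contraTneq R_c => eq_cz1; rewrite -W1_c eq_cz1 W1_z1.
by rewrite pos_swap tpermD 1?eq_sym.
Qed.

Lemma score_cons V s c : score (V :: s) c = borda_pts V c + score s c.
Proof. exact: big_cons. Qed.

Lemma score_cat s1 s2 c : score (s1 ++ s2) c = score s1 c + score s2 c.
Proof. exact: big_cat. Qed.

Lemma score_rcons s V c : score (rcons s V) c = score s c + borda_pts V c.
Proof. by rewrite -cats1 score_cat score_cons /score big_nil addn0. Qed.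

Lemma prof_seq_nth n s : size s = n -> prof_seq [ffun j : 'I_n => nth 1%g s j] = s.
Proof.
move=> <-; rewrite /prof_seq; under eq_map do rewrite ffunE.
by rewrite (map_comp (nth 1%g s) val) val_enum_ord -/(mkseq _ _) mkseq_nth.
Qed.

Definition reversal_pairs r : seq (vote k) := flatten (nseq r [:: 1%g; rev_vote 1%g]).

Lemma size_reversal_pairs r : size (reversal_pairs r) = r.*2.
Proof. by elim: r => //= r IH; rewrite IH. Qed.

Lemma score_reversal_pairs r c : score (reversal_pairs r) c = r * k.-1.
Proof.
elim: r => [|r IH]; first by rewrite /score big_nil.
rewrite /= !score_cons IH /borda_pts pos_rev_vote mulSn.
by have := @pos_lt 1%g c; lia.
Qed.

(* A vote and its reversal together give every candidate [k.-1] points. *)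
Lemma exists_profile n s : size s <= n -> ~~ odd (n - size s) ->
  exists K (P : nprofile n k), forall c, score (prof_seq P) c = score s c + K.
Proof.
move=> le_sn even_ns; pose r := (n - size s)./2.
have size_pad : size (s ++ reversal_pairs r) = n.
  by rewrite size_cat size_reversal_pairs; have := odd_double_half (n - size s); lia.
exists (r * k.-1), [ffun j : 'I_n => nth 1%g (s ++ reversal_pairs r) j] => c.
by rewrite prof_seq_nth // score_cat score_reversal_pairs.
Qed.

Lemma exists_profile1 n W : odd n ->
  exists K (P : nprofile n k), forall V c,
    score (rcons (prof_seq P) V) c + (pos W c + pos V c) = K.
Proof.
move=> n_odd; have n_even : ~~ odd (n - size [:: W]) by rewrite oddB ?odd_gt0 // n_odd.
have [K [P score_P]] := @exists_profile n [:: W] (odd_gt0 n_odd) n_even.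
exists (K + k.-1.*2), P => V c.
rewrite score_rcons score_P score_cons /score big_nil /borda_pts.
by have := pos_lt W c; have := pos_lt V c; lia.
Qed.

Lemma exists_profile2 n W1 W2 : 0 < n -> ~~ odd n ->
  exists K (P : nprofile n k), forall V c,
    score (rcons (prof_seq P) V) c + (pos W1 c + pos W2 c + pos V c) = K.
Proof.
move=> n_gt0 n_even; have n_gt1 : 1 < n by move: n_gt0 n_even; case: n => [|[]].
have n2_even : ~~ odd (n - size [:: W1; W2]) by rewrite oddB // (negbTE n_even).
have [K [P score_P]] := @exists_profile n [:: W1; W2] n_gt1 n2_even.
exists (K + k.-1 * 3), P => V c.
rewrite score_rcons score_P !score_cons /score big_nil /borda_pts.
by have := pos_lt W1 c; have := pos_lt W2 c; have := pos_lt V c; lia.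
Qed.

End Votes.

Arguments pos_lt {k} V c.
Arguments pos_neq {k} V {x y}.

Lemma perm_first_difference k (V1 V2 : {perm 'I_k}) : V1 != V2 ->
  exists i : 'I_k, V1 i != V2 i /\ forall j : 'I_k, j < i -> V1 j = V2 j.
Proof.
move=> ne_V; have [j0 ne_j0] : exists j, V1 j != V2 j.
  apply/existsP; apply: contraNT ne_V => /existsPn eq_V.
  by apply/eqP/permP => j; apply/eqP; rewrite -[_ == _]negbK eq_V.
have [i ne_i i_min] := arg_minnP (P := fun j => V1 j != V2 j) val ne_j0.
exists i; split=> // j lt_ji; apply/eqP; apply: contraTT lt_ji => /i_min.
by rewrite -leqNgt.
Qed.

Lemma pos_agree k (V1 V2 : vote k) (i : nat) c :
  (forall j : 'I_k, j < i -> V1 j = V2 j) -> pos V1 c < i -> pos V2 c = pos V1 c.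
Proof.
rewrite /pos => agree /agree; rewrite permKV => eq_c.
by rewrite {1}eq_c permK.
Qed.

Section Winner.
Variable m : nat.
Implicit Types (s : seq (vote m.+1)) (c e : 'I_m.+1).

Definition borda_best s c : Prop :=
  forall e, score s e <= score s c /\ (score s e = score s c -> c <= e).

Lemma borda_winner_best s : borda_best s (borda_winner s).
Proof.
pose M := \max_c score s c.
have [c1 max_c1] : {c1 | M = score s c1} by apply: eq_bigmax; rewrite card_ord.
have [c0 /eqP c0_max c0_min] :=
  arg_minnP (P := fun c => score s c == M) val (introT eqP (esym max_c1)).
have le_M e : score s e <= M by apply: leq_bigmax.
have : [forall e, (score s e <= score s c0) && ((score s e == score s c0) ==> (c0 <= e))].
  apply/forallP => e; rewrite c0_max le_M /=; apply/implyP; exact: c0_min.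
rewrite /borda_winner; case: pickP => [w /forallP w_best _ e | /(_ c0) -> //].
by have /andP [-> /implyP w_min] := w_best e; split=> // /eqP; apply: w_min.
Qed.

Lemma borda_winnerE s c : borda_best s c -> borda_winner s = c.
Proof.
move=> c_best; set w := borda_winner s.
have [le_wc wc_min] := c_best w.
have [le_cw cw_min] := borda_winner_best s c.
have eq_score : score s w = score s c by apply/eqP; rewrite eqn_leq le_wc le_cw.
by apply/val_inj/eqP; rewrite eqn_leq cw_min ?wc_min.
Qed.

Lemma borda_winner_strict s c :
  (forall e, e != c -> score s e < score s c) -> borda_winner s = c.
Proof.
move=> c_max; apply: borda_winnerE => e.
have [-> | ne_ec] := eqVneq e c; first by [].
by have lt_ec := c_max e ne_ec; split=> [|eq_ec]; [exact: ltnW | move: lt_ec; rewrite eq_ec ltnn].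
Qed.

End Winner.

Section FirstDifference.
Variables (m : nat) (VM U : vote m.+1) (i : 'I_m.+1).
Hypothesis U_ne_VM_at_i : U i != VM i.
Hypothesis U_eq_VM_before_i : forall j : 'I_m.+1, j < i -> U j = VM j.

Let a := VM i.
Let d := U i.

Lemma a_ne_d : a != d.
Proof. by rewrite eq_sym. Qed.

Lemma posU_above c : pos VM c < i -> pos U c = pos VM c.
Proof. by apply: pos_agree => j /U_eq_VM_before_i. Qed.

Lemma posVM_above c : pos U c < i -> pos VM c = pos U c.
Proof. exact: pos_agree. Qed.

Lemma first_difference_facts :
  pos VM a = i /\ pos U d = i /\ i < pos VM d /\ i < pos U a /\ pos VM d <= m.
Proof.
have posVM_a : pos VM a = i by rewrite /pos permK.
have posU_d : pos U d = i by rewrite /pos permK.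
have := pos_neq VM a_ne_d; have := pos_neq U a_ne_d.
have := @posU_above d; have := @posVM_above a; have := pos_lt VM d; lia.
Qed.

(* The candidates [VM] ranks above position [i] sit at the bottom of [W] in
   reverse order, so their positions in [W] and in [VM] (or [U]) always sum to [m]. *)
Definition leads_with (W : vote m.+1) x y :=
  [/\ pos W x = 0, pos W y = 1 & forall c, pos VM c < i -> pos W c = m - pos VM c].

Lemma exists_leads_with x y : x != y -> i <= pos VM x -> i <= pos VM y ->
  exists W, leads_with W x y.
Proof.
move=> ne_xy le_ix le_iy; have [_ [_ [lt_id [_ le_dm]]]] := first_difference_facts.
have [W [W_x W_y W_R]] := exists_vote_top2 (rev_vote VM) ne_xy.
exists W; split=> // c lt_ci.
have ne_cx : c != x by apply: contraTneq lt_ci => ->; rewrite -leqNgt.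
have ne_cy : c != y by apply: contraTneq lt_ci => ->; rewrite -leqNgt.
have R_c : pos (rev_vote VM) c = m - pos VM c by rewrite pos_rev_vote.
rewrite W_R ?R_c //; lia.
Qed.

Lemma exists_leads_ad : exists W, leads_with W a d.
Proof.
have [posVM_a [_ [lt_id _]]] := first_difference_facts.
by apply: exists_leads_with; rewrite ?a_ne_d ?posVM_a ?(ltnW lt_id).
Qed.

Lemma exists_leads_da : exists W, leads_with W d a.
Proof.
have [posVM_a [_ [lt_id _]]] := first_difference_facts.
by apply: exists_leads_with; rewrite 1?eq_sym ?a_ne_d ?posVM_a ?(ltnW lt_id).
Qed.

Lemma candidate_cases Wad Wda e : leads_with Wad a d -> leads_with Wda d a ->
  (pos VM e <= m /\ pos U e <= m /\ pos Wad e <= m /\ pos Wda e <= m) /\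
  ((pos VM e < i /\ pos U e = pos VM e /\ pos Wad e = m - pos VM e /\ pos Wda e = m - pos VM e) \/
   (pos VM e = i /\ pos U e = pos U a /\ pos Wad e = 0 /\ pos Wda e = 1) \/
   (pos VM e = pos VM d /\ pos U e = i /\ pos Wad e = 1 /\ pos Wda e = 0) \/
   (i < pos VM e /\ pos VM e <> pos VM d /\ i < pos U e /\ 1 < pos Wad e /\ 1 < pos Wda e)).
Proof.
move=> [Wad_a Wad_d Wad_above] [Wda_d Wda_a Wda_above].
have [posVM_a [posU_d _]] := first_difference_facts.
split.
  have := pos_lt VM e; have := pos_lt U e; have := pos_lt Wad e; have := pos_lt Wda e; lia.
have [lt_ei | le_ie] := ltnP (pos VM e) i.
  by left; rewrite posU_above ?Wad_above ?Wda_above.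
have [-> | ne_ea] := eqVneq e a; first by right; left.
have [-> | ne_ed] := eqVneq e d; first by right; right; left.
have ne_VM_ea := pos_neq VM ne_ea.
do 3 right; split; first lia.
split; first exact (pos_neq VM ne_ed).
split; first by have := pos_neq U ne_ed; have := @posVM_above e; lia.
have := pos_neq Wad ne_ea; have := pos_neq Wad ne_ed.
have := pos_neq Wda ne_ea; have := pos_neq Wda ne_ed; lia.
Qed.

Lemma even_manipulation n : 0 < n -> ~~ odd n ->
  exists P : nprofile n m.+1, pos VM (outcome P VM) < pos VM (outcome P U).
Proof.
move=> n_gt0 n_even; have facts := first_difference_facts.
have [Wad Wad_lead] := exists_leads_ad; have [Wda Wda_lead] := exists_leads_da.
have [K [P score_P]] := exists_profile2 Wad Wda n_gt0 n_even.
have cases e := candidate_cases e Wad_lead Wda_lead.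
exists P; rewrite /outcome.
have -> : borda_winner (rcons (prof_seq P) VM) = a.
  apply: borda_winner_strict => e /(pos_neq VM) ne_ea.
  by have := score_P VM e; have := score_P VM a; have := cases e; have := cases a; lia.
have -> : borda_winner (rcons (prof_seq P) U) = d.
  apply: borda_winner_strict => e /(pos_neq VM) ne_ed.
  by have := score_P U e; have := score_P U d; have := cases e; have := cases d; lia.
lia.
Qed.

Lemma odd_manipulation n : odd n ->
  exists P : nprofile n m.+1, pos VM (outcome P VM) < pos VM (outcome P U).
Proof.
move=> n_odd; have facts := first_difference_facts.
have [Wad Wad_lead] := exists_leads_ad; have [Wda Wda_lead] := exists_leads_da.
have [K1 [P1 score_P1]] := exists_profile1 Wda n_odd.
have [K2 [P2 score_P2]] := exists_profile1 Wad n_odd.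
have cases e := candidate_cases e Wad_lead Wda_lead.
have P1_U : outcome P1 U = d.
  apply: borda_winner_strict => e /(pos_neq VM) ne_ed.
  by have := score_P1 U e; have := score_P1 U d; have := cases e; have := cases d; lia.
set w1 := outcome P1 VM.
have [lt_w1d | ge_w1d] := ltnP (pos VM w1) (pos VM d); first by exists P1; rewrite P1_U.
have w1_best : borda_best (rcons (prof_seq P1) VM) w1 := borda_winner_best _.
have w1_d : w1 = d.
  apply: (pos_inj (V := VM)); have [le_aw1 _] := w1_best a.
  by have := score_P1 VM a; have := score_P1 VM w1; have := cases w1; have := cases a; lia.
(* [d] beat [a] and any tied candidate above [i] only by index; under [U] the
   vote [a; d; ...] reproduces exactly these ties. *)
rewrite w1_d in w1_best; exists P2.
have P2_VM : outcome P2 VM = a.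
  apply: borda_winner_strict => e /(pos_neq VM) ne_ea.
  by have := score_P2 VM e; have := score_P2 VM a; have := cases e; have := cases a; lia.
have P2_U : outcome P2 U = d.
  apply: borda_winnerE => e.
  have [le_ad _] := w1_best a; have [le_ed eq_ed] := w1_best e.
  have := score_P1 VM e; have := score_P1 VM d; have := score_P1 VM a.
  have := score_P2 U e; have := score_P2 U d; have := cases e; have := cases d; have := cases a.
  by move=> *; split=> [|eq_score]; [lia | apply: eq_ed; lia].
by rewrite P2_VM P2_U; lia.
Qed.

Lemma exists_profile_sincere_better n : 0 < n ->
  exists P : nprofile n m.+1, pos VM (outcome P VM) < pos VM (outcome P U).
Proof.
move=> n_gt0; case/boolP: (odd n) => [n_odd | n_even].
- exact: odd_manipulation n_odd.
- exact: even_manipulation n_gt0 n_even.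
Qed.

End FirstDifference.

Theorem theorem2 (m n : nat) (hn : 0 < n) :
  forall VM U : vote m.+1, ~ dominates (fun _ : nprofile n m.+1 => True) VM U VM.
Proof.
move=> VM U [weakly [P [_ strictly]]].
have [eq_UV | ne_UV] := eqVneq U VM.
  by move: strictly; rewrite eq_UV /strictly_above ltnn.
have [i [ne_i eq_before_i]] := perm_first_difference ne_UV.
have [P0 better_P0] := exists_profile_sincere_better ne_i eq_before_i hn.
by move: (weakly P0 I); rewrite /weakly_above leqNgt better_P0.
Qed.
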